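(* A frame $L$ is subfit if and only if the coframe $(\mathsf{Ex}(L),\sqsubseteq)$ of exact filters is a Boolean algebra.
   Context: A frame is a complete lattice $L$ with $(\bigvee A)\wedge b=\bigvee_{a\in A}(a\wedge b)$. $L$ is subfit if for all $a,b$: whenever ($\forall c$, $a\vee c=1\Rightarrow b\vee c=1$) then $a\le b$. A filter is a nonempty up-closed subset closed under finite meets. A meet $\bigwedge M$ is exact if $(\bigwedge M)\vee b=\bigwedge_{a\in M}(a\vee b)$ for all $b$; $\mathsf{Ex}(L)$ is the set of filters containing every exact meet of their subsets, ordered by reverse inclusion $F\sqsubseteq G$ iff $G\subseteq F$ (it is a coframe in which joins are intersections). *)

Record CompleteLattice := {
  carrier :> Type;
  le : carrier -> carrier -> Prop;
  le_refl : forall a, le a a;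
  le_trans : forall a b c, le a b -> le b c -> le a c;
  le_antisym : forall a b, le a b -> le b a -> a = b;
  sup : (carrier -> Prop) -> carrier;
  sup_ub : forall (A : carrier -> Prop) a, A a -> le a (sup A);
  sup_least : forall (A : carrier -> Prop) b,
      (forall a, A a -> le a b) -> le (sup A) b
}.

Arguments le {c} _ _ : rename.
Arguments sup {c} _ : rename.

Section Ops.
Variable L : CompleteLattice.

Definition inf (M : L -> Prop) : L := sup (fun x => forall a, M a -> le x a).
Definition top : L := sup (fun _ => True).
Definition join (a b : L) : L := sup (fun x => x = a \/ x = b).
Definition meet (a b : L) : L := inf (fun x => x = a \/ x = b).

Definition is_frame : Prop :=
  forall (A : L -> Prop) (b : L),
    meet (sup A) b = sup (fun x => exists a, A a /\ x = meet a b).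

Definition subfit : Prop :=
  forall a b : L,
    (forall c, join a c = top -> join b c = top) -> le a b.

Definition is_filter (F : L -> Prop) : Prop :=
  (exists a, F a) /\
  (forall a b, F a -> le a b -> F b) /\
  (forall a b, F a -> F b -> F (meet a b)).

Definition exact_meet (M : L -> Prop) : Prop :=
  forall b, join (inf M) b = inf (fun x => exists a, M a /\ x = join a b).

Definition exact_filter (F : L -> Prop) : Prop :=
  is_filter F /\
  forall M : L -> Prop, (forall a, M a -> F a) -> exact_meet M -> F (inf M).

Definition ex_le (F G : L -> Prop) : Prop := forall a, G a -> F a.

End Ops.

(** Everything is stated relationally via least upper / greatest lower
    bounds, so no equality on elements of X is needed. *)
Section Bool.
Variables (X : Type) (S : X -> Prop) (R : X -> X -> Prop).

Definition is_lub2 (a b j : X) : Prop :=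
  S j /\ R a j /\ R b j /\ (forall z, S z -> R a z -> R b z -> R j z).
Definition is_glb2 (a b m : X) : Prop :=
  S m /\ R m a /\ R m b /\ (forall z, S z -> R z a -> R z b -> R z m).

Definition is_boolean_algebra : Prop :=
  exists bot tp : X,
    S bot /\ S tp /\ (forall x, S x -> R bot x /\ R x tp) /\
    (forall a b, S a -> S b -> exists j, is_lub2 a b j) /\
    (forall a b, S a -> S b -> exists m, is_glb2 a b m) /\
    (forall a b c bc m ab ac r,
        S a -> S b -> S c ->
        is_lub2 b c bc -> is_glb2 a bc m ->
        is_glb2 a b ab -> is_glb2 a c ac -> is_lub2 ab ac r -> R m r) /\
    (forall a, S a -> exists b, S b /\ is_glb2 a b bot /\ is_lub2 a b tp).
End Bool.


(** Write [F*] for the set of [c] with [c ∨ f = 1] for all [f ∈ F]; it is an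
    exact filter and [F ∩ F* = {1}].  In [Ex(L)] joins are intersections, and
    the meet of [F] and [G] consists of the exact meets of elements lying above
    some [f ∧ g]; the frame law makes this meet distribute over intersections.
    Subfitness makes [F] and [F*] generate all of [L]: the
    elements [f ∧ c] ([f ∈ F], [c ∈ F*]) have an exact meet lying below every
    element.  Conversely, if [Ex(L)] is Boolean and [G_x] is the complement of
    [↑x], then [G_a ⊆ (↑a)*] and [(↑b)* ⊆ G_b]; the premise of subfitness says
    [(↑a)* ⊆ (↑b)*], so [G_a ⊆ G_b] and hence [↑b ⊆ ↑a], i.e. [a ≤ b]. *)

Section BooleanComplement.
Variables (X : Type) (S : X -> Prop) (R : X -> X -> Prop).
Hypothesis R_refl : forall x, R x x.
Hypothesis R_trans : forall x y z, R x y -> R y z -> R x z.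

Lemma is_glb2_sym a b m : is_glb2 X S R a b m -> is_glb2 X S R b a m.
Proof. intros (Sm & Hma & Hmb & Hm). repeat split; auto. Qed.

Variables bot tp : X.
Hypothesis bounded : forall x, S x -> R bot x /\ R x tp.
Hypothesis has_lub : forall a b, S a -> S b -> exists j, is_lub2 X S R a b j.
Hypothesis has_glb : forall a b, S a -> S b -> exists m, is_glb2 X S R a b m.
Hypothesis distributive : forall a b c bc m ab ac r,
  S a -> S b -> S c ->
  is_lub2 X S R b c bc -> is_glb2 X S R a bc m ->
  is_glb2 X S R a b ab -> is_glb2 X S R a c ac -> is_lub2 X S R ab ac r -> R m r.

(* [c = c ∧ (x ∨ y) = (c ∧ x) ∨ (c ∧ y) = c ∧ y ≤ y]. *)
Lemma complement_le x c y :
  S x -> S c -> S y -> is_glb2 X S R x c bot ->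
  (forall z, S z -> R x z -> R y z -> R tp z) -> R c y.
Proof.
  intros Sx Sc Sy (_ & _ & _ & Hbot) Hxy.
  destruct (has_lub x y Sx Sy) as [j Hj]; pose proof Hj as (Sj & Hxj & Hyj & _).
  destruct (has_glb c j Sc Sj) as [m Hm]; pose proof Hm as (_ & _ & _ & Hm_glb).
  destruct (has_glb c x Sc Sx) as [cx Hcx]; pose proof Hcx as (Scx & Hcx_c & Hcx_x & _).
  destruct (has_glb c y Sc Sy) as [cy Hcy]; pose proof Hcy as (Scy & _ & Hcy_y & _).
  destruct (has_lub cx cy Scx Scy) as [r Hr]; pose proof Hr as (_ & _ & _ & Hr_lub).
  assert (Hcm : R c m).
  { apply Hm_glb; [exact Sc | apply R_refl |].
    apply (R_trans _ tp); [exact (proj2 (bounded c Sc)) | apply Hxy; assumption]. }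
  assert (Hrcy : R r cy).
  { apply Hr_lub; [exact Scy | | apply R_refl].
    apply (R_trans _ bot); [apply Hbot; assumption | exact (proj1 (bounded cy Scy))]. }
  apply (R_trans _ m); [exact Hcm |].
  apply (R_trans _ r); [apply (distributive c x y j m cx cy r); assumption |].
  apply (R_trans _ cy); assumption.
Qed.

End BooleanComplement.

Section ExactFilters.
Variable L : CompleteLattice.
Hypothesis frame : is_frame L.

Arguments le_refl {c0} a.
Arguments le_trans {c0} a b c _ _.
Arguments le_antisym {c0} a b _ _.
Arguments sup_ub {c0} A a _.
Arguments sup_least {c0} A b _.
Arguments inf {L} M.
Arguments top {L}.
Arguments join {L} a b.
Arguments meet {L} a b.
Arguments is_filter {L} F.
Arguments exact_meet {L} M.
Arguments exact_filter {L} F.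

Implicit Types (a b c d p q w x y : L) (F G H M N S : L -> Prop).

Lemma inf_lb M a : M a -> le (inf M) a.
Proof. intros Ha. apply sup_least. intros x Hx. exact (Hx a Ha). Qed.

Lemma inf_glb M x : (forall a, M a -> le x a) -> le x (inf M).
Proof. intros H. exact (sup_ub _ x H). Qed.

Lemma inf_le_inf M N :
  (forall b, N b -> exists a, M a /\ le a b) -> le (inf M) (inf N).
Proof.
  intros H. apply inf_glb. intros b Hb. destruct (H b Hb) as (a & Ha & Hab).
  exact (le_trans _ a _ (inf_lb M a Ha) Hab).
Qed.

Lemma join_ubl a b : le a (join a b).
Proof. apply sup_ub. left; reflexivity. Qed.

Lemma join_ubr a b : le b (join a b).
Proof. apply sup_ub. right; reflexivity. Qed.

Lemma join_lub a b c : le a c -> le b c -> le (join a b) c.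
Proof. intros Hac Hbc. apply sup_least. intros x [-> | ->]; assumption. Qed.

Lemma meet_lbl a b : le (meet a b) a.
Proof. apply inf_lb. left; reflexivity. Qed.

Lemma meet_lbr a b : le (meet a b) b.
Proof. apply inf_lb. right; reflexivity. Qed.

Lemma meet_glb a b c : le c a -> le c b -> le c (meet a b).
Proof. intros Hca Hcb. apply inf_glb. intros x [-> | ->]; assumption. Qed.

Lemma le_top a : le a top.
Proof. apply sup_ub. exact I. Qed.

Lemma top_le_eq a : le top a -> a = top.
Proof. intros H. exact (le_antisym _ _ (le_top a) H). Qed.

Lemma join_le_join a a' b b' : le a a' -> le b b' -> le (join a b) (join a' b').
Proof.
  intros Ha Hb. apply join_lub.
  - exact (le_trans _ _ _ Ha (join_ubl a' b')).
  - exact (le_trans _ _ _ Hb (join_ubr a' b')).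
Qed.

Lemma meet_le_meet a a' b b' : le a a' -> le b b' -> le (meet a b) (meet a' b').
Proof.
  intros Ha Hb. apply meet_glb.
  - exact (le_trans _ _ _ (meet_lbl a b) Ha).
  - exact (le_trans _ _ _ (meet_lbr a b) Hb).
Qed.

Ltac join_mem :=
  match goal with
  | |- le ?a ?a => apply le_refl
  | |- le _ (join ?b ?c) =>
      first [ apply (le_trans _ b); [join_mem | apply join_ubl]
            | apply (le_trans _ c); [join_mem | apply join_ubr] ]
  end.
Ltac join_le := repeat apply join_lub; join_mem.

Lemma joinC a b : join a b = join b a.
Proof. apply le_antisym; join_le. Qed.

Lemma frame_meet_joinl p q r : le (meet (join p q) r) (join (meet p r) (meet q r)).
Proof.
  assert (E : meet (join p q) r =
              sup (fun x => exists a, (a = p \/ a = q) /\ x = meet a r))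
    by exact (frame _ r).
  rewrite E. apply sup_least. intros x (a & [-> | ->] & ->).
  - apply join_ubl.
  - apply join_ubr.
Qed.

Lemma frame_meet_joinr p q r : le (meet r (join p q)) (join (meet r p) (meet r q)).
Proof.
  apply (le_trans _ (meet (join p q) r)); [apply meet_glb; [apply meet_lbr | apply meet_lbl] |].
  apply (le_trans _ _ _ (frame_meet_joinl p q r)).
  apply join_le_join; apply meet_glb; (apply meet_lbr || apply meet_lbl).
Qed.

Lemma frame_join_meet p q r : le (meet (join p r) (join q r)) (join (meet p q) r).
Proof.
  apply (le_trans _ _ _ (frame_meet_joinl p r (join q r))). apply join_lub.
  - apply (le_trans _ _ _ (frame_meet_joinr q r p)).
    apply join_le_join; [apply le_refl | apply meet_lbr].
  - exact (le_trans _ _ _ (meet_lbl r (join q r)) (join_ubr _ r)).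
Qed.

Lemma exact_meet_intro M :
  (forall d, le (inf (fun y => exists a, M a /\ y = join a d)) (join (inf M) d)) ->
  exact_meet M.
Proof.
  intros H d. apply le_antisym; [| apply H].
  apply inf_glb. intros y (a & Ha & ->).
  apply join_le_join; [apply inf_lb, Ha | apply le_refl].
Qed.

Definition exact_meet_of S x : Prop :=
  exists M, exact_meet M /\ (forall w, M w -> S w) /\ inf M = x.

Lemma exact_meet_of_self S x : S x -> exact_meet_of S x.
Proof.
  intros Sx.
  assert (E : inf (fun w => w = x) = x).
  { apply le_antisym; [apply inf_lb; reflexivity |].
    apply inf_glb. intros a ->. apply le_refl. }
  exists (fun w => w = x). split; [| split; [intros w ->; exact Sx | exact E]].
  apply exact_meet_intro. intros d. rewrite E.
  apply inf_lb. exists x. split; reflexivity.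
Qed.

(* Replacing each [m ∈ M] by [m ∨ y] moves the exact meet up to [y]. *)
Lemma exact_meet_of_up S x y :
  (forall a b, S a -> le a b -> S b) ->
  exact_meet_of S x -> le x y -> exact_meet_of S y.
Proof.
  intros HS (M & HM & HMS & <-) Hle.
  assert (E : inf (fun w => exists m, M m /\ w = join m y) = y).
  { apply le_antisym.
    - rewrite <- (HM y). apply join_lub; [exact Hle | apply le_refl].
    - apply inf_glb. intros w (m & _ & ->). apply join_ubr. }
  eexists. split; [| split; [| exact E]].
  - apply exact_meet_intro. intros d. rewrite E.
    apply (le_trans _ (inf (fun z => exists m, M m /\ z = join m (join y d)))).
    + apply inf_le_inf. intros b (m & Hm & ->). exists (join (join m y) d).
      split; [exists (join m y); split; [exists m; auto | reflexivity] | join_le].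
    + rewrite <- (HM (join y d)).
      apply join_lub; [apply (le_trans _ y); [exact Hle | apply join_ubl] | apply le_refl].
  - intros w (m & Hm & ->). exact (HS m _ (HMS m Hm) (join_ubl m y)).
Qed.

Lemma exact_meet_of_meet S x y :
  exact_meet_of S x -> exact_meet_of S y -> exact_meet_of S (meet x y).
Proof.
  intros (M & HM & HMS & <-) (N & HN & HNS & <-).
  assert (E : inf (fun w => M w \/ N w) = meet (inf M) (inf N)).
  { apply le_antisym.
    - apply meet_glb; apply inf_le_inf; intros w Hw; exists w; split; auto using le_refl.
    - apply inf_glb. intros w [Hw | Hw].
      + exact (le_trans _ _ _ (meet_lbl _ _) (inf_lb M w Hw)).
      + exact (le_trans _ _ _ (meet_lbr _ _) (inf_lb N w Hw)). }
  exists (fun w => M w \/ N w). split; [| split; [intros w [Hw | Hw]; auto | exact E]].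
  apply exact_meet_intro. intros d. rewrite E.
  apply (le_trans _ (meet (join (inf M) d) (join (inf N) d))); [| apply frame_join_meet].
  apply meet_glb; [rewrite (HM d) | rewrite (HN d)];
    apply inf_le_inf; intros z (m & Hm & ->);
    exists (join m d); (split; [exists m; auto | apply le_refl]).
Qed.

Lemma exact_meet_of_inf S N :
  exact_meet N -> (forall n, N n -> exact_meet_of S n) -> exact_meet_of S (inf N).
Proof.
  intros HN HNS.
  set (U := fun w => exists n M,
              N n /\ exact_meet M /\ (forall v, M v -> S v) /\ inf M = n /\ M w).
  assert (E : inf U = inf N).
  { apply le_antisym.
    - apply inf_glb. intros n Hn. destruct (HNS n Hn) as (M & HM & HMS & <-).
      apply inf_le_inf. intros w Hw. exists w. split; [exists (inf M), M; auto | apply le_refl].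
    - apply inf_glb. intros u (n & M & Hn & _ & _ & <- & Hu).
      exact (le_trans _ _ _ (inf_lb N _ Hn) (inf_lb M u Hu)). }
  exists U. split; [| split; [| exact E]].
  - apply exact_meet_intro. intros d. rewrite E, (HN d).
    apply inf_glb. intros z (n & Hn & ->). destruct (HNS n Hn) as (M & HM & HMS & <-).
    rewrite (HM d). apply inf_le_inf. intros z (m & Hm & ->). exists (join m d).
    split; [exists m; split; [exists (inf M), M; auto | reflexivity] | apply le_refl].
  - intros w (n & M & _ & _ & HMS & _ & Hw). exact (HMS w Hw).
Qed.

Lemma exact_meet_pairwise_join M N x :
  exact_meet M -> exact_meet N -> inf M = x -> inf N = x ->
  exact_meet (fun w => exists p q, M p /\ N q /\ w = join p q) /\
  inf (fun w => exists p q, M p /\ N q /\ w = join p q) = x.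
Proof.
  intros HM HN HMx HNx.
  assert (E : inf (fun w => exists p q, M p /\ N q /\ w = join p q) = x).
  { apply le_antisym.
    - apply (le_trans _ (inf (fun z => exists p, M p /\ z = join p x))).
      + apply inf_glb. intros z (p & Hp & ->).
        apply (le_trans _ (join x p)); [| join_le].
        rewrite <- HNx, (HN p). apply inf_le_inf. intros z (q & Hq & ->).
        exists (join p q). split; [exists p, q; auto | join_le].
      + rewrite <- (HM x), HMx. join_le.
    - apply inf_glb. intros w (p & q & Hp & _ & ->).
      rewrite <- HMx. exact (le_trans _ _ _ (inf_lb M p Hp) (join_ubl p q)). }
  split; [| exact E].
  apply exact_meet_intro. intros d. rewrite E.
  apply (le_trans _ (inf (fun z => exists p, M p /\ z = join p (join x d)))).
  - apply inf_glb. intros z (p & Hp & ->).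
    apply (le_trans _ (join x (join p d))); [| join_le].
    rewrite <- HNx, (HN (join p d)). apply inf_le_inf. intros z (q & Hq & ->).
    exists (join (join p q) d).
    split; [exists (join p q); split; [exists p, q; auto | reflexivity] | join_le].
  - rewrite <- (HM (join x d)), HMx. join_le.
Qed.

Lemma filter_top F : is_filter F -> F top.
Proof. intros ([a Ha] & HF & _). exact (HF a top Ha (le_top a)). Qed.

Lemma filter_up F a b : is_filter F -> F a -> le a b -> F b.
Proof. intros (_ & HF & _). apply HF. Qed.

Lemma filter_meet F a b : is_filter F -> F a -> F b -> F (meet a b).
Proof. intros (_ & _ & HF). apply HF. Qed.

Lemma exact_filter_top_only : exact_filter (fun w => w = top).
Proof.
  split; [split; [| split] |].
  - exists top. reflexivity.
  - intros a b -> H. exact (top_le_eq b H).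
  - intros a b -> ->. apply top_le_eq, meet_glb; apply le_refl.
  - intros M HM _. apply top_le_eq, inf_glb. intros a Ha. rewrite (HM a Ha). apply le_refl.
Qed.

Lemma exact_filter_full : exact_filter (fun _ : L => True).
Proof. split; [split; [exists top |] |]; repeat split. Qed.

Lemma exact_filter_inter F G :
  exact_filter F -> exact_filter G -> exact_filter (fun w => F w /\ G w).
Proof.
  intros [HF HFex] [HG HGex]. split; [split; [| split] |].
  - exists top. split; apply filter_top; assumption.
  - intros a b [Fa Ga] Hab.
    split; [exact (filter_up F a b HF Fa Hab) | exact (filter_up G a b HG Ga Hab)].
  - intros a b [Fa Ga] [Fb Gb]. split; apply filter_meet; assumption.
  - intros M HM HMex. split; [apply HFex | apply HGex]; try exact HMex; intros a Ha; apply HM, Ha.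
Qed.

Lemma exact_filter_principal a : exact_filter (le a).
Proof.
  split; [split; [| split] |].
  - exists a. apply le_refl.
  - intros x y Hx Hxy. exact (le_trans _ _ _ Hx Hxy).
  - intros x y Hx Hy. exact (meet_glb x y a Hx Hy).
  - intros M HM _. exact (inf_glb M a HM).
Qed.

Definition compl F y : Prop := forall f, F f -> join y f = top.

Lemma compl_inter_top F w : F w -> compl F w -> w = top.
Proof. intros Fw Hw. rewrite <- (Hw w Fw). apply le_antisym; join_le. Qed.

Lemma exact_filter_compl F : exact_filter (compl F).
Proof.
  split; [split; [| split] |].
  - exists top. intros f _. exact (top_le_eq _ (join_ubl top f)).
  - intros x y Hx Hxy f Hf. apply top_le_eq. rewrite <- (Hx f Hf).
    exact (join_le_join _ _ _ _ Hxy (le_refl f)).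
  - intros x y Hx Hy f Hf. apply top_le_eq.
    apply (le_trans _ (meet (join x f) (join y f))); [| apply frame_join_meet].
    rewrite (Hx f Hf), (Hy f Hf). apply meet_glb; apply le_refl.
  - intros M HM HMex f Hf. apply top_le_eq. rewrite (HMex f).
    apply inf_glb. intros y (m & Hm & ->). rewrite (HM m Hm f Hf). apply le_refl.
Qed.

Definition meet_upset F G w : Prop := exists p q, F p /\ G q /\ le (meet p q) w.

Lemma meet_upset_up F G a b : meet_upset F G a -> le a b -> meet_upset F G b.
Proof.
  intros (p & q & Fp & Gq & Hpq) Hab.
  exists p, q. split; [| split]; eauto using le_trans.
Qed.

Lemma meet_upset_l F G p : is_filter G -> F p -> meet_upset F G p.
Proof.
  intros HG Fp. exists p, top.
  split; [exact Fp | split; [exact (filter_top G HG) | apply meet_lbl]].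
Qed.

Lemma meet_upset_r F G q : is_filter F -> G q -> meet_upset F G q.
Proof.
  intros HF Gq. exists top, q.
  split; [exact (filter_top F HF) | split; [exact Gq | apply meet_lbr]].
Qed.

Lemma meet_upset_sub F G H :
  exact_filter H -> (forall w, F w -> H w) -> (forall w, G w -> H w) ->
  forall w, meet_upset F G w -> H w.
Proof.
  intros [HH _] HFH HGH w (p & q & Fp & Gq & Hpq).
  exact (filter_up H _ w HH (filter_meet H p q HH (HFH p Fp) (HGH q Gq)) Hpq).
Qed.

Lemma meet_upset_join F G H p q :
  is_filter F -> is_filter G -> is_filter H ->
  meet_upset F G p -> meet_upset F H q -> meet_upset F (fun w => G w /\ H w) (join p q).
Proof.
  intros HF HG HH (a1 & b1 & Fa1 & Gb1 & Hp) (a2 & c2 & Fa2 & Hc2 & Hq).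
  exists (meet a1 a2), (join b1 c2). split; [| split].
  - exact (filter_meet F a1 a2 HF Fa1 Fa2).
  - split; [exact (filter_up G b1 _ HG Gb1 (join_ubl b1 c2))
           | exact (filter_up H c2 _ HH Hc2 (join_ubr b1 c2))].
  - apply (le_trans _ _ _ (frame_meet_joinr b1 c2 (meet a1 a2))). apply join_le_join.
    + exact (le_trans _ _ _ (meet_le_meet _ _ _ _ (meet_lbl a1 a2) (le_refl b1)) Hp).
    + exact (le_trans _ _ _ (meet_le_meet _ _ _ _ (meet_lbr a1 a2) (le_refl c2)) Hq).
Qed.

Lemma exact_filter_exact_meet_of S :
  (exists a, S a) -> (forall a b, S a -> le a b -> S b) -> exact_filter (exact_meet_of S).
Proof.
  intros [a Sa] HS. split; [split; [| split] |].
  - exists a. exact (exact_meet_of_self S a Sa).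
  - intros x y. exact (exact_meet_of_up S x y HS).
  - intros x y. apply exact_meet_of_meet.
  - intros N HN HNex. exact (exact_meet_of_inf S N HNex HN).
Qed.

Lemma exact_meet_of_least S F x :
  exact_filter F -> (forall w, S w -> F w) -> exact_meet_of S x -> F x.
Proof. intros [_ HF] HSF (M & HM & HMS & <-). apply HF; auto. Qed.

Lemma exact_filter_gen F G :
  is_filter F -> is_filter G -> exact_filter (exact_meet_of (meet_upset F G)).
Proof.
  intros HF HG. apply exact_filter_exact_meet_of.
  - exists top. exact (meet_upset_l F G top HG (filter_top F HF)).
  - apply meet_upset_up.
Qed.

Lemma exact_meet_of_meet_upset_inter F G H x :
  is_filter F -> is_filter G -> is_filter H ->
  exact_meet_of (meet_upset F G) x -> exact_meet_of (meet_upset F H) x ->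
  exact_meet_of (meet_upset F (fun w => G w /\ H w)) x.
Proof.
  intros HF HG HH (M & HM & HMS & HMx) (N & HN & HNS & HNx).
  destruct (exact_meet_pairwise_join M N x HM HN HMx HNx) as [HP EP].
  eexists. split; [exact HP | split; [| exact EP]].
  intros w (p & q & Mp & Nq & ->). apply meet_upset_join; auto.
Qed.

Local Notation ex_lub := (is_lub2 (L -> Prop) exact_filter (ex_le L)).
Local Notation ex_glb := (is_glb2 (L -> Prop) exact_filter (ex_le L)).

Lemma ex_le_refl F : ex_le L F F.
Proof. intros w Hw. exact Hw. Qed.

Lemma ex_le_trans F G H : ex_le L F G -> ex_le L G H -> ex_le L F H.
Proof. intros HFG HGH w Hw. exact (HFG w (HGH w Hw)). Qed.

Lemma inter_is_lub F G :
  exact_filter F -> exact_filter G -> ex_lub F G (fun w => F w /\ G w).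
Proof.
  intros SF SG. split; [exact (exact_filter_inter F G SF SG) |].
  split; [intros w [Fw _]; exact Fw |]. split; [intros w [_ Gw]; exact Gw |].
  intros z _ HFz HGz w Hw. split; [apply HFz | apply HGz]; exact Hw.
Qed.

Lemma gen_is_glb F G :
  exact_filter F -> exact_filter G -> ex_glb F G (exact_meet_of (meet_upset F G)).
Proof.
  intros [HF _] [HG _]. split; [exact (exact_filter_gen F G HF HG) |].
  split; [intros w Fw; exact (exact_meet_of_self _ w (meet_upset_l F G w HG Fw)) |].
  split; [intros w Gw; exact (exact_meet_of_self _ w (meet_upset_r F G w HF Gw)) |].
  intros z Sz HFz HGz. intros w Hw.
  exact (exact_meet_of_least _ z w Sz (meet_upset_sub F G z Sz HFz HGz) Hw).
Qed.

Lemma ex_distributive F G H GH M FG FH K :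
  exact_filter F -> exact_filter G -> exact_filter H ->
  ex_lub G H GH -> ex_glb F GH M -> ex_glb F G FG -> ex_glb F H FH -> ex_lub FG FH K ->
  ex_le L M K.
Proof.
  intros SF SG SH (_ & _ & _ & GH_least) (SM & HFM & HGHM & _)
    (_ & _ & _ & FG_greatest) (_ & _ & _ & FH_greatest) (_ & HKFG & HKFH & _) x Kx.
  pose proof (proj1 SF) as HF; pose proof (proj1 SG) as HG; pose proof (proj1 SH) as HH.
  assert (Gen_FG : exact_meet_of (meet_upset F G) x).
  { apply (FG_greatest _ (exact_filter_gen F G HF HG)); [| | exact (HKFG x Kx)];
      intros w Hw; apply exact_meet_of_self; auto using meet_upset_l, meet_upset_r. }
  assert (Gen_FH : exact_meet_of (meet_upset F H) x).
  { apply (FH_greatest _ (exact_filter_gen F H HF HH)); [| | exact (HKFH x Kx)];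
      intros w Hw; apply exact_meet_of_self; auto using meet_upset_l, meet_upset_r. }
  assert (HGHM' : forall w, G w /\ H w -> M w).
  { intros w GHw. apply HGHM. apply (GH_least _ (exact_filter_inter G H SG SH)); [| | exact GHw];
      intros v [Gv Hv]; assumption. }
  apply (exact_meet_of_least _ M x SM (meet_upset_sub _ _ M SM HFM HGHM')).
  exact (exact_meet_of_meet_upset_inter F G H x HF HG HH Gen_FG Gen_FH).
Qed.

Definition compl_meets F m : Prop := exists f y, F f /\ compl F y /\ m = meet f y.

Lemma compl_meets_join_le F d :
  subfit L -> is_filter F ->
  le (inf (fun z => exists m, compl_meets F m /\ z = join m d)) d.
Proof.
  intros Hsub HF. apply Hsub. intros c Hc.
  assert (Hdc : compl F (join d c)).
  { intros f Hf. apply top_le_eq. rewrite <- Hc.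
    apply (le_trans _ (join (join (meet f top) d) c)).
    - apply join_le_join; [| apply le_refl]. apply inf_lb. exists (meet f top).
      split; [exists f, top; split; [exact Hf | split; [| reflexivity]] | reflexivity].
      intros g _. exact (top_le_eq _ (join_ubl top g)).
    - apply (le_trans _ (join (join f d) c)); [| join_le].
      apply join_le_join; [apply join_le_join; [apply meet_lbl |] |]; apply le_refl. }
  apply top_le_eq. rewrite <- Hc.
  apply (le_trans _ (join (join (meet top (join d c)) d) c)).
  - apply join_le_join; [| apply le_refl]. apply inf_lb. exists (meet top (join d c)).
    split; [exists top, (join d c); split; [exact (filter_top F HF) | auto] | reflexivity].
  - apply (le_trans _ (join (join (join d c) d) c)); [| join_le].
    apply join_le_join; [apply join_le_join; [apply meet_lbr |] |]; apply le_refl.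
Qed.

Lemma compl_meets_exact F : subfit L -> is_filter F -> exact_meet (compl_meets F).
Proof.
  intros Hsub HF. apply exact_meet_intro. intros d.
  exact (le_trans _ d _ (compl_meets_join_le F d Hsub HF) (join_ubr _ d)).
Qed.

Lemma compl_meets_inf_le F w : subfit L -> is_filter F -> le (inf (compl_meets F)) w.
Proof.
  intros Hsub HF.
  refine (le_trans _ _ _ _ (compl_meets_join_le F w Hsub HF)).
  apply inf_le_inf. intros b (m & Hm & ->). exists m. split; [exact Hm | apply join_ubl].
Qed.

Lemma glb_compl_full F : subfit L -> exact_filter F -> ex_glb F (compl F) (fun _ : L => True).
Proof.
  intros Hsub [HF _]. split; [exact exact_filter_full |].
  split; [intros w _; exact I |]. split; [intros w _; exact I |].
  intros z [Hz Hzex] HFz Hcz w _.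
  apply (filter_up z (inf (compl_meets F)) w Hz); [| exact (compl_meets_inf_le F w Hsub HF)].
  apply Hzex; [| exact (compl_meets_exact F Hsub HF)].
  intros m (f & y & Hf & Hy & ->). exact (filter_meet z f y Hz (HFz f Hf) (Hcz y Hy)).
Qed.

Lemma lub_compl_top F : exact_filter F -> ex_lub F (compl F) (fun w => w = top).
Proof.
  intros [HF _]. split; [exact exact_filter_top_only |].
  split; [intros w ->; exact (filter_top F HF) |].
  split; [intros w ->; exact (filter_top _ (proj1 (exact_filter_compl F))) |].
  intros z _ HFz Hcz w Hw. exact (compl_inter_top F w (HFz w Hw) (Hcz w Hw)).
Qed.

Lemma subfit_boolean : subfit L -> is_boolean_algebra (L -> Prop) exact_filter (ex_le L).
Proof.
  intros Hsub. exists (fun _ : L => True), (fun w : L => w = top).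
  split; [exact exact_filter_full |]. split; [exact exact_filter_top_only |].
  split; [intros F [HF _]; split; [intros w _; exact I | intros w ->; exact (filter_top F HF)] |].
  split; [intros F G SF SG; eexists; exact (inter_is_lub F G SF SG) |].
  split; [intros F G SF SG; eexists; exact (gen_is_glb F G SF SG) |].
  split; [exact ex_distributive |].
  intros F SF. exists (compl F). split; [exact (exact_filter_compl F) |].
  split; [exact (glb_compl_full F Hsub SF) | exact (lub_compl_top F SF)].
Qed.

Lemma lub_principal_compl T u G :
  (forall w, T w -> w = top) -> exact_filter G -> ex_lub (le u) G T ->
  forall g, G g -> compl (le u) g.
Proof.
  intros HT [HG _] (_ & _ & _ & Hleast) g Gg f Hf. apply HT.
  apply (Hleast (le (join g f))); [exact (exact_filter_principal _) | | | apply le_refl].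
  - intros w Hw. exact (le_trans _ _ _ Hf (le_trans _ _ _ (join_ubr g f) Hw)).
  - intros w Hw. exact (filter_up G g w HG Gg (le_trans _ _ _ (join_ubl g f) Hw)).
Qed.

Lemma compl_principal_mono a b :
  (forall c, join a c = top -> join b c = top) -> forall y, compl (le a) y -> compl (le b) y.
Proof.
  intros Hab y Hy f Hbf. apply top_le_eq.
  rewrite <- (Hab y (eq_trans (joinC a y) (Hy a (le_refl a)))).
  apply join_lub; [exact (le_trans _ _ _ Hbf (join_ubr y f)) | apply join_ubl].
Qed.

Lemma boolean_subfit : is_boolean_algebra (L -> Prop) exact_filter (ex_le L) -> subfit L.
Proof.
  intros (bot & tp & _ & Stp & Hbd & Hlub & Hglb & Hdist & Hcomp) a b Hab.
  pose proof (complement_le _ _ _ ex_le_refl ex_le_trans bot tp Hbd Hlub Hglb Hdist) as Hle.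
  assert (Htp : forall w, tp w -> w = top) by exact (proj2 (Hbd _ exact_filter_top_only)).
  destruct (Hcomp _ (exact_filter_principal a)) as (Ga & SGa & Ha_glb & Ha_lub).
  destruct (Hcomp _ (exact_filter_principal b)) as (Gb & SGb & Hb_glb & Hb_lub).
  assert (HGb : forall y, compl (le b) y -> Gb y).
  { apply (Hle (le b)); auto using exact_filter_principal, exact_filter_compl.
    intros z _ Hzb Hzc w Hw.
    rewrite (compl_inter_top (le b) w (Hzb w Hw) (Hzc w Hw)).
    exact (filter_top tp (proj1 Stp)). }
  assert (HGa : forall y, Ga y -> Gb y).
  { intros y Hy. apply HGb, (compl_principal_mono a b Hab).
    exact (lub_principal_compl tp a Ga Htp SGa Ha_lub y Hy). }
  enough (Hba : ex_le L (le a) (le b)) by exact (Hba b (le_refl b)).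
  apply (Hle Ga); auto using exact_filter_principal, is_glb2_sym.
  intros z Sz HzGa Hzb. destruct Hb_lub as (_ & _ & _ & Hb_least).
  apply Hb_least; [exact Sz | exact Hzb |]. intros w Hw. exact (HGa w (HzGa w Hw)).
Qed.

End ExactFilters.

Theorem mainTheorem11 (L : CompleteLattice) (HL : is_frame L) :
  subfit L <-> is_boolean_algebra (L -> Prop) (exact_filter L) (ex_le L).
Proof. split; [exact (subfit_boolean L HL) | exact (boolean_subfit L HL)]. Qed.
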